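(* In the setting below, $d(V)\subseteq V$, and the cochain complex $V$ is acyclic (has zero cohomology).
   Context: A complex subspace arrangement in $\mathbb{C}^l$ is a finite set of complex linear subspaces of $\mathbb{C}^l$ with no two distinct members $x\subset y$. For a finite set $\mathcal{C}$ of linear subspaces of a complex vector space $W$ with a linear order, $D(\mathcal{C})$ is the cochain complex over $\mathbb{Q}$ with basis all subsets $\sigma\subseteq\mathcal{C}$, where with $\vee\sigma=\bigcap_{x\in\sigma}x$ ($\vee\emptyset=W$), $\deg\sigma=2\operatorname{codim}_W(\vee\sigma)-|\sigma|$ and for $\sigma=\{x_{i_1},\dots,x_{i_r}\}$ in increasing order, $d\sigma=\sum_{j:\vee(\sigma\setminus\{x_{i_j}\})=\vee\sigma}(-1)^j(\sigma\setminus\{x_{i_j}\})$. Setting: $\mathcal{A}=\{x_0,\dots,x_n\}$ is a complex subspace arrangement in $\mathbb{C}^l$, $\mathcal{A}'=\mathcal{A}\setminus\{x_0\}$; on $\mathcal{A}'$, $y\sim z$ iff $x_0\cap y=x_0\cap z$, with classes $\mathcal{A}_1,\dots,\mathcal{A}_r$; the linear order is $x_0<x_1<\dots<x_n$ with elements of $\mathcal{A}_i$ preceding elements of $\mathcal{A}_j$ whenever $i<j$. $D(\mathcal{A}')$ is the subcomplex of $D(\mathcal{A})$ spanned by subsets not containing $x_0$. $E=\{(y,z)\in\mathcal{A}'\times\mathcal{A}'\mid y\sim z,\ y\ne z\}$. For $(u,v)\in E$, $I_{u,v}$ is the subspace of the quotient complex $D(\mathcal{A})/D(\mathcal{A}')$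 spanned by the classes of all $\{x_0,u\}\cup Y-\{x_0,v\}\cup Y$ and all $\{x_0,u,v\}\cup Y$, for $Y\subseteq\mathcal{A}\setminus\{x_0,u,v\}$, and $V=\sum_{(u,v)\in E}I_{u,v}$. *)

From HB Require Import structures.
From mathcomp Require Import all_boot all_order all_algebra.
From mathcomp Require Import complex Rstruct.
Set Implicit Arguments. Unset Strict Implicit. Unset Printing Implicit Defensive.
Import GRing.Theory.
Local Open Scope ring_scope.

Definition Cplx : fieldType := Rdefinitions.R[i].

(* A linear subspace of C^l is represented (mxalgebra style) by a square
   matrix 'M[Cplx]_l whose row space is the subspace; subspace equality is
   (_ == _)%MS, inclusion (_ <= _)%MS, intersection (_ :&: _)%MS. *)

(* A = {x_0, ..., x_n} indexed by 'I_n.+1 (so the linear order is the index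
   order); it is a subspace arrangement: distinct members, none contained in
   another. *)
Definition is_arrangement (l n : nat) (x : 'I_n.+1 -> 'M[Cplx]_l) : Prop :=
  forall i j : 'I_n.+1, i != j -> ~~ (x i <= x j)%MS.

(* \/sigma = intersection of the members of sigma (the full space C^l for the
   empty set: the unit of \bigcap is 1%:M). *)
Definition meet (l n : nat) (x : 'I_n.+1 -> 'M[Cplx]_l) (s : {set 'I_n.+1})
  : 'M[Cplx]_l := (\bigcap_(i in s) x i)%MS.

Definition codim (l : nat) (M : 'M[Cplx]_l) : nat := (l - \rank M)%N.

Definition deg (l n : nat) (x : 'I_n.+1 -> 'M[Cplx]_l) (s : {set 'I_n.+1}) : int :=
  ((2 * codim (meet x s))%N)%:Z - (#|s|)%:Z.

(* the position j (1-based) of i in sigma listed in increasing order *)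
Definition pos (n : nat) (i : 'I_n.+1) (s : {set 'I_n.+1}) : nat :=
  #|[set k in s | (k <= i)%N]|.

(* D(A): the Q-vector space with basis the subsets of A *)
Definition cochain (n : nat) := {ffun {set 'I_n.+1} -> rat^o}.

Definition ebasis (n : nat) (s : {set 'I_n.+1}) : cochain n :=
  [ffun t => (t == s)%:R].

Definition dbasis (l n : nat) (x : 'I_n.+1 -> 'M[Cplx]_l) (s : {set 'I_n.+1})
  : cochain n :=
  \sum_(i in s | (meet x (s :\ i) == meet x s)%MS)
     ((-1) ^+ pos i s) *: ebasis (s :\ i).

Definition dD (l n : nat) (x : 'I_n.+1 -> 'M[Cplx]_l) (f : cochain n) : cochain n :=
  \sum_(s : {set 'I_n.+1}) f s *: dbasis x s.

Definition homog (l n : nat) (x : 'I_n.+1 -> 'M[Cplx]_l) (k : int) (f : cochain n)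
  : Prop := forall s, f s != 0 -> deg x s = k.

Definition DAprime (n : nat) : {vspace cochain n} :=
  (\sum_(s : {set 'I_n.+1} | ord0 \notin s) <[ebasis s]>)%VS.

Definition simA (l n : nat) (x : 'I_n.+1 -> 'M[Cplx]_l) (y z : 'I_n.+1) : bool :=
  (x ord0 :&: x y == x ord0 :&: x z)%MS.

Definition inE_ (l n : nat) (x : 'I_n.+1 -> 'M[Cplx]_l) (u v : 'I_n.+1) : bool :=
  [&& u != ord0, v != ord0, u != v & simA x u v].

(* I_{u,v}, lifted to D(A): span of representatives of its generators *)
Definition Iuv (l n : nat) (x : 'I_n.+1 -> 'M[Cplx]_l) (u v : 'I_n.+1)
  : {vspace cochain n} :=
  (\sum_(Y : {set 'I_n.+1} | Y \subset ~: [set ord0; u; v])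
     (<[ebasis (ord0 |: (u |: Y)) - ebasis (ord0 |: (v |: Y))]>
      + <[ebasis (ord0 |: (u |: (v |: Y)))]>))%VS.

(* Vhat = preimage in D(A) of V = sum_{(u,v) in E} I_{u,v} under the quotient
   map D(A) -> D(A)/D(A'):   Vhat = sum I_{u,v} + D(A').
   A class [f] of D(A)/D(A') lies in V  iff  f \in Vhat. *)
Definition Vhat (l n : nat) (x : 'I_n.+1 -> 'M[Cplx]_l) : {vspace cochain n} :=
  ((\sum_(u : 'I_n.+1) \sum_(v : 'I_n.+1 | inE_ x u v) Iuv x u v) + DAprime n)%VS.

(* Let c range over the classes of ~, listed in the given order, and let m_c be
   the first element of class c.  Coning with m_c (on the subsets containing x_0
   that meet class c but not m_c) is a homotopy H_c with
     d H_c + H_c d = 1 - r_c   modulo D(A'),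
   where the retraction r_c keeps a subset avoiding class c, replaces the unique
   element of class c of a subset by m_c, and kills subsets meeting class c
   twice; the signs match because m_c is minimal and the classes are intervals
   of the order.  Each 1 - r_c maps D(A) into V, and the composite of the r_c
   kills the generators of V modulo D(A'), while it agrees modulo D(A') with the
   composite of the chain maps 1 - d H_c - H_c d.  Hence d(V) is contained in V,
   and a cocycle f of V is the coboundary of the sum of the H_c f_c, where f_c
   is f deformed by the first c homotopies. *)

From HB Require Import structures.
From mathcomp Require Import all_boot all_order all_algebra.
From mathcomp Require Import complex Rstruct ring.

Set Implicit Arguments. Unset Strict Implicit. Unset Printing Implicit Defensive.
Import GRing.Theory.
Local Open Scope ring_scope.

Section LinearExtension.
Variable n : nat.
Implicit Types (P : pred {set 'I_n.+1}) (s t : {set 'I_n.+1}) (f g : cochain n).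
Implicit Types (B C : {set 'I_n.+1} -> cochain n) (U : {vspace cochain n}).

Definition linext B f : cochain n := \sum_s f s *: B s.

Lemma linext_is_linear B : linear (linext B).
Proof.
move=> a f g; rewrite /linext scaler_sumr -big_split; apply: eq_bigr => s _.
by rewrite !ffunE scalerDl scalerA.
Qed.

HB.instance Definition _ B :=
  GRing.isLinear.Build _ _ _ _ (linext B) (linext_is_linear B).

Lemma linext_ebasis B s : linext B (ebasis s) = B s.
Proof.
rewrite /linext (bigD1 s) //= big1 ?addr0 => [|t /negbTE nts].
  by rewrite ffunE eqxx scale1r.
by rewrite ffunE nts scale0r.
Qed.

Lemma linext_ebasisK f : linext (@ebasis n) f = f.
Proof.
apply/ffunP => t; rewrite /linext sum_ffunE (bigD1 t) //= big1 ?addr0.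
  by rewrite !ffunE eqxx; exact: mulr1.
by move=> s nst; rewrite !ffunE eq_sym (negbTE nst); exact: mulr0.
Qed.

Lemma linext_comp B C f : linext B (linext C f) = linext (linext B \o C) f.
Proof. by rewrite linear_sum; apply: eq_bigr => s _; rewrite linearZ. Qed.

Lemma linext_funD B C f :
  linext (fun s => B s + C s) f = linext B f + linext C f.
Proof. by rewrite /linext -big_split; apply: eq_bigr => s _; rewrite scalerDr. Qed.

Lemma linext_funN B f : linext (fun s => - B s) f = - linext B f.
Proof. by rewrite /linext -sumrN; apply: eq_bigr => s _; rewrite scalerN. Qed.

Lemma linext_funB B C f :
  linext (fun s => B s - C s) f = linext B f - linext C f.
Proof. by rewrite linext_funD linext_funN. Qed.

Definition ebasis_span P : {vspace cochain n} :=
  (\sum_(s | P s) <[ebasis s]>)%VS.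

Lemma ebasis_span_ebasis P s : P s -> ebasis s \in ebasis_span P.
Proof. by move=> Ps; apply: (subvP (sumv_sup s Ps (subvv _))); exact: memv_line. Qed.

Lemma ebasis_spanP P f :
  reflect (forall s, ~~ P s -> f s = 0) (f \in ebasis_span P).
Proof.
apply: (iffP idP) => [/memv_sumP [g gP ->] s nPs | f0].
  rewrite sum_ffunE big1 // => t Pt; have /vlineP [a ->] := gP t Pt.
  by rewrite !ffunE; case: eqP => [st | _]; [rewrite st Pt in nPs | exact: mulr0].
rewrite -[f]linext_ebasisK /linext (bigID P) /= [X in _ + X]big1 ?addr0.
  by apply: memv_suml => s Ps; rewrite memvZ // ebasis_span_ebasis.
by move=> s /f0 ->; rewrite scale0r.
Qed.

Lemma memv_linext P B f U :
  (forall s, P s -> B s \in U) -> f \in ebasis_span P -> linext B f \in U.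
Proof.
move=> BU /ebasis_spanP f0; apply: memv_suml => s _.
by case: (boolP (P s)) => [/BU/memvZ -> // | /f0 ->]; rewrite scale0r mem0v.
Qed.

Lemma eq_linext P B C f :
  (forall s, P s -> B s = C s) -> f \in ebasis_span P -> linext B f = linext C f.
Proof.
move=> BC /ebasis_spanP f0; apply: eq_bigr => s _.
by case: (boolP (P s)) => [/BC -> // | /f0 ->]; rewrite !scale0r.
Qed.

Lemma ebasis_DAprime s : ord0 \notin s -> ebasis s \in DAprime n.
Proof. exact: ebasis_span_ebasis. Qed.

Lemma ebasis_span_predT f : f \in ebasis_span predT.
Proof. by apply/ebasis_spanP. Qed.

End LinearExtension.

Notation sgn m := ((-1 : rat) ^+ m).

Lemma sgnK m : sgn m * sgn m = 1.
Proof. by rewrite -exprD addnn -mul2n exprM sqrrN !expr1n. Qed.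

Section Position.
Variable n : nat.
Implicit Types (i j m : 'I_n.+1) (s : {set 'I_n.+1}).

Lemma sgn_leq_swap i j : i != j -> sgn (j <= i)%N = - sgn (i <= j)%N.
Proof.
move=> nij; case: (ltngtP i j) => [_|_|/val_inj eij]; rewrite ?expr0 ?expr1 ?opprK //.
by rewrite eij eqxx in nij.
Qed.

Lemma posE i s : pos i s = (\sum_(k in s) (k <= i)%N)%N.
Proof.
rewrite /pos -sum1_card (eq_bigl (fun k => (k \in s) && (k <= i)%N)) => [|k].
  by rewrite big_mkcondr /=; apply: eq_bigr => k _; case: leqP.
by rewrite inE.
Qed.

Lemma pos_setU1 i j s : j \notin s -> pos i (j |: s) = (pos i s + (j <= i))%N.
Proof. by move=> js; rewrite !posE big_setU1 //= addnC. Qed.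

Lemma pos_setD1 i j s : j \in s -> pos i s = (pos i (s :\ j) + (j <= i))%N.
Proof. by move=> js; rewrite -{1}(setD1K js) pos_setU1 // setD11. Qed.

Lemma pos_next m i s : (m < i)%N -> i \in s ->
  (forall k, k \in s -> ~~ (m < k < i)%N) -> pos i s = (pos m s).+1.
Proof.
move=> mi iS gap; rewrite !posE.
have -> : (\sum_(k in s) (k <= i) =
           \sum_(k in s) (k <= m) + \sum_(k in s) (m < k <= i))%N.
  rewrite -big_split /=; apply: eq_bigr => k _.
  by case: (leqP k m) => [km | //]; rewrite (leq_trans km (ltnW mi)).
rewrite -[RHS]addn1; congr (_ + _)%N.
rewrite (bigD1 i) //= leqnn mi big1 ?addn0 // => k /andP [ks ki].
case: (boolP (m < k <= i)%N) => // /andP [mk ki'].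
by case/negP: (gap k ks); rewrite mk ltn_neqAle ki' andbT.
Qed.

Lemma sgn_pos_cone m i s : m \notin s -> i \in s -> i != m ->
  sgn (pos m (m |: s)) * sgn (pos i (m |: s)) +
  sgn (pos i s) * sgn (pos m (m |: (s :\ i))) = 0.
Proof.
move=> ms iS nim; have ms' : m \notin s :\ i by rewrite !inE negb_and ms orbT.
rewrite !pos_setU1 // (pos_setD1 m iS) leqnn !exprD (sgn_leq_swap nim).
transitivity (sgn (pos m (s :\ i)) * sgn (pos i s) * (sgn (i <= m) * sgn (i <= m) - 1)).
  ring.
by rewrite sgnK subrr mulr0.
Qed.

Lemma sgn_pos_swap i j s : i \in s -> j \in s -> i != j ->
  sgn (pos i s) * sgn (pos j (s :\ i)) = - (sgn (pos j s) * sgn (pos i (s :\ j))).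
Proof.
move=> iS js nij; rewrite (pos_setD1 j iS) (pos_setD1 i js) !exprD.
by rewrite (sgn_leq_swap nij); ring.
Qed.

End Position.

Section Differential.
Variables (l n : nat) (x : 'I_n.+1 -> 'M[Cplx]_l).
Implicit Types (i j : 'I_n.+1) (s t : {set 'I_n.+1}) (f g : cochain n) (k : int).

Lemma dD_is_linear : linear (dD x).
Proof. exact: linext_is_linear. Qed.

HB.instance Definition _ := GRing.isLinear.Build _ _ _ _ (dD x) dD_is_linear.

Lemma dD_ebasis s : dD x (ebasis s) = dbasis x s.
Proof. exact: linext_ebasis. Qed.

Definition removable s i := (meet x (s :\ i) == meet x s)%MS.

Definition dterm s i : cochain n :=
  if removable s i then sgn (pos i s) *: ebasis (s :\ i) else 0.

Lemma dbasisE s : dbasis x s = \sum_(i in s) dterm s i.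
Proof. by rewrite /dbasis big_mkcondr. Qed.

Lemma meet_subset s t : s \subset t -> (meet x t <= meet x s)%MS.
Proof.
move=> st; apply/sub_bigcapmxP => i si.
by apply: (bigcapmx_inf i); [exact: (subsetP st) | exact: submx_refl].
Qed.

Lemma removable_sim s i j : ord0 \in s -> i \in s -> j \in s -> i != j ->
  i != ord0 -> simA x j i -> removable s i.
Proof.
move=> s0 si sj nij ni0 /andP [sim _]; apply/andP; split; last first.
  by apply: meet_subset; exact: subD1set.
apply/sub_bigcapmxP => k sk; case: (eqVneq k i) => [-> | nki]; last first.
  by apply: (bigcapmx_inf k); [rewrite !inE nki | exact: submx_refl].
have meet_x0j : (meet x (s :\ i) <= x ord0 :&: x j)%MS.
  rewrite sub_capmx; apply/andP; split.
    by apply: (bigcapmx_inf ord0); [rewrite !inE s0 eq_sym ni0 | exact: submx_refl].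
  by apply: (bigcapmx_inf j); [rewrite !inE sj andbT eq_sym nij | exact: submx_refl].
exact: (submx_trans meet_x0j (submx_trans sim (capmxSr _ _))).
Qed.

Lemma deg_setD1 s i : i \in s -> removable s i -> deg x (s :\ i) = deg x s + 1.
Proof.
move=> si /eqmx_rank rk; rewrite /deg /codim rk.
by have := cardsD1 i s; rewrite si => ->; rewrite add1n PoszD; ring.
Qed.

Definition homog_space k := ebasis_span (fun s => deg x s == k).

Lemma homogP k f : homog x k f <-> f \in homog_space k.
Proof.
split=> [hf | /ebasis_spanP hf s].
  by apply/ebasis_spanP => s; apply: contraNeq => /hf ->.
by apply: contraNeq => /hf ->.
Qed.

Lemma dbasis_homog s : dbasis x s \in homog_space (deg x s + 1).
Proof.
rewrite dbasisE; apply: memv_suml => i si; rewrite /dterm.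
case: ifP => [ri | _]; last exact: mem0v.
by rewrite memvZ // ebasis_span_ebasis // deg_setD1.
Qed.

Lemma dD_homog k f : f \in homog_space k -> dD x f \in homog_space (k + 1).
Proof. by apply: memv_linext => s /eqP <-; exact: dbasis_homog. Qed.

Lemma dD_DAprime f : f \in DAprime n -> dD x f \in DAprime n.
Proof.
apply: memv_linext => s s0; rewrite dbasisE; apply: memv_suml => i _.
rewrite /dterm; case: ifP => _; last exact: mem0v.
by rewrite memvZ // ebasis_DAprime // !inE negb_and s0 orbT.
Qed.

Lemma removable_pair s i j :
  removable s i && removable (s :\ i) j = (meet x (s :\ i :\ j) == meet x s)%MS.
Proof.
have sub1 : s :\ i \subset s by exact: subD1set.
have sub2 : s :\ i :\ j \subset s :\ i by exact: subD1set.
apply/idP/idP => [/andP [/andP [r1 _] /andP [r2 _]] | /andP [r _]].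
  by rewrite /eqmx (submx_trans r2 r1) meet_subset // (subset_trans sub2 sub1).
rewrite /removable /eqmx (meet_subset sub1) (meet_subset sub2) !andbT.
by rewrite (submx_trans (meet_subset sub2) r) (submx_trans r (meet_subset sub1)).
Qed.

Lemma setD1C s i j : s :\ i :\ j = s :\ j :\ i.
Proof. by apply/setP => k; rewrite !inE andbCA. Qed.

Lemma dD_dbasis s : dD x (dbasis x s) = 0.
Proof.
pose F i j : cochain n :=
  if [&& i \in s, j \in s, i != j & removable s i && removable (s :\ i) j]
  then (sgn (pos i s) * sgn (pos j (s :\ i))) *: ebasis (s :\ i :\ j) else 0.
have -> : dD x (dbasis x s) = \sum_i \sum_j F i j.
  rewrite dbasisE linear_sum big_mkcond /=; apply: eq_bigr => i _.
  case si: (i \in s); last by rewrite big1 // => j _; rewrite /F si.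
  rewrite /dterm; case ri: (removable s i); last first.
    by rewrite linear0 big1 // => j _; rewrite /F si ri /= !andbF.
  rewrite linearZ /= dD_ebasis dbasisE scaler_sumr big_mkcond /=.
  apply: eq_bigr => j _; rewrite /F /dterm si ri !inE /=.
  case: (eqVneq j i) => [-> | nji] /=; first by rewrite andbF.
  case: (j \in s) => //=; case: (removable (s :\ i) j) => /=; last by rewrite scaler0.
  by rewrite scalerA.
have F_anti i j : F j i = - F i j.
  rewrite /F; case: (eqVneq i j) => [-> | nij] /=; first by rewrite !andbF oppr0.
  rewrite !removable_pair [s :\ j :\ i]setD1C.
  case si: (i \in s); case sj: (j \in s) => //=; try by rewrite oppr0.
  case: ifP => _; last by rewrite oppr0.
  by rewrite (sgn_pos_swap si sj nij) scaleNr opprK.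
set X := \sum_i \sum_j F i j.
have X_anti : X = - X.
  rewrite {1}/X exchange_big /= -sumrN; apply: eq_bigr => j _.
  by rewrite -sumrN; apply: eq_bigr => i _; exact: F_anti.
have /eqP : X *+ 2 = 0 by rewrite mulr2n {1}X_anti addNr.
by rewrite -scaler_nat scaler_eq0 => /orP [// | /eqP].
Qed.

Lemma dDK f : dD x (dD x f) = 0.
Proof.
have -> : dD x (dD x f) = linext (fun s => dD x (dbasis x s)) f := linext_comp _ _ _.
by rewrite /linext big1 // => s _; rewrite dD_dbasis scaler0.
Qed.

End Differential.

Section Vhat.
Variables (l n : nat) (x : 'I_n.+1 -> 'M[Cplx]_l).
Local Notation o := (@ord0 n).
Implicit Types (u v : 'I_n.+1) (t : {set 'I_n.+1}).

Lemma Iuv_sub_Vhat u v : inE_ x u v -> (Iuv x u v <= Vhat x)%VS.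
Proof.
move=> uv; apply: subv_trans (addvSl _ _).
by apply: (sumv_sup u) => //; exact: (sumv_sup v).
Qed.

Lemma DAprime_sub_Vhat : (DAprime n <= Vhat x)%VS.
Proof. exact: addvSr. Qed.

Lemma ebasis_triple_Vhat t u v : o \in t -> u \in t -> v \in t -> inE_ x u v ->
  ebasis t \in Vhat x.
Proof.
move=> t0 tu tv uv; apply: (subvP (Iuv_sub_Vhat uv)).
have -> : t = o |: (u |: (v |: (t :\: [set o; u; v]))).
  apply/setP => k; rewrite !in_setU1 in_setD !inE.
  case: (eqVneq k o) => [-> | _] //=; case: (eqVneq k u) => [-> | _] //=.
  by case: (eqVneq k v) => [-> | _] //=.
apply: (subvP (sumv_sup (t :\: [set o; u; v]) _ (addvSr _ _))); last exact: memv_line.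
by apply/subsetP => k; rewrite in_setD in_setC => /andP [].
Qed.

Lemma ebasis_diff_Vhat t u v : o \in t -> u \notin t -> v \notin t -> inE_ x u v ->
  ebasis (u |: t) - ebasis (v |: t) \in Vhat x.
Proof.
move=> t0 tu tv uv; apply: (subvP (Iuv_sub_Vhat uv)).
have tw w : w |: t = o |: (w |: (t :\ o)).
  apply/setP => k; rewrite !in_setU1 in_setD1.
  by case: (eqVneq k o) => [-> | _] //=; rewrite t0 orbT.
rewrite !tw; apply: (subvP (sumv_sup (t :\ o) _ (addvSl _ _))); last exact: memv_line.
apply/subsetP => k; rewrite in_setD1 in_setC !inE => /andP [nk0 tk].
by rewrite (negbTE nk0) /=; apply/norP; split; apply: contraTneq tk => ->.
Qed.

End Vhat.

Section Classes.
Variables (l n : nat) (x : 'I_n.+1 -> 'M[Cplx]_l) (cls : 'I_n.+1 -> nat).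
Hypothesis simA_cls : forall y z : 'I_n.+1, y != ord0 -> z != ord0 ->
  simA x y z <-> cls y = cls z.
Hypothesis cls_mono : forall y z : 'I_n.+1, y != ord0 -> z != ord0 ->
  (y <= z)%N -> (cls y <= cls z)%N.

Local Notation I := 'I_n.+1.
Local Notation o := (@ord0 n).
Local Notation removable := (removable x).
Local Notation dterm := (dterm x).
Implicit Types (c : nat) (i j m u v : I) (s t : {set I}) (f g : cochain n).

Definition cls_set c : {set I} := [set i | (i != o) && (cls i == c)].

(* The junk value [o] is only taken when [cls_set c] is empty. *)
Definition cls_min c : I :=
  if [pick i in cls_set c] is Some i0
  then [arg min_(i < i0 in cls_set c) (i : nat)] else o.

Lemma cls_setP c i : reflect (i != o /\ cls i = c) (i \in cls_set c).
Proof. by rewrite inE; apply: (iffP andP) => [[-> /eqP] | [-> ->]]. Qed.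

Lemma cls_set0 c : o \notin cls_set c.
Proof. by apply/cls_setP => -[]. Qed.

Lemma cls_minP c : cls_set c != set0 ->
  cls_min c \in cls_set c /\ forall j, j \in cls_set c -> (cls_min c <= j)%N.
Proof.
move=> /set0Pn ne; rewrite /cls_min; case: pickP => [i0 i0c | none].
  by case: arg_minnP.
by case: ne => i; rewrite none.
Qed.

Lemma cls_set_neq0 c (A : {set I}) : A :&: cls_set c != set0 -> cls_set c != set0.
Proof. by apply: contraNneq => ->; rewrite setI0. Qed.

Lemma cls_set_interval c i j (k : I) : i \in cls_set c -> j \in cls_set c ->
  (i < k < j)%N -> k \in cls_set c.
Proof.
move=> /cls_setP [ni0 <-] /cls_setP [nj0 eij] /andP [ik kj].
have nk0 : k != o by apply: contraTneq ik => ->.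
apply/cls_setP; split=> //; apply/anti_leq/andP; split.
  by rewrite -eij; apply: cls_mono => //; exact: ltnW.
by apply: cls_mono => //; exact: ltnW.
Qed.

Lemma removable_cls c s i j : o \in s -> i \in s -> j \in s -> i != j ->
  i \in cls_set c -> j \in cls_set c -> removable s i.
Proof.
move=> s0 si sj nij /cls_setP [ni0 ci] /cls_setP [nj0 cj].
by apply: (removable_sim s0 si sj nij ni0); apply/simA_cls => //; rewrite ci cj.
Qed.

Definition cone c s : cochain n :=
  if [&& o \in s, s :&: cls_set c != set0 & cls_min c \notin s]
  then sgn (pos (cls_min c) (cls_min c |: s)) *: ebasis (cls_min c |: s) else 0.

Definition retract c s : cochain n :=
  if o \notin s then ebasis s
  else if #|s :&: cls_set c| == 0%N then ebasis s
  else if #|s :&: cls_set c| == 1%N then ebasis (cls_min c |: (s :\: cls_set c))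
  else 0.

Definition homotopy c : cochain n -> cochain n := linext (cone c).

HB.instance Definition _ c :=
  GRing.isLinear.Build _ _ _ _ (homotopy c) (linext_is_linear (cone c)).

Lemma cone0 c s :
  (o \notin s) || (s :&: cls_set c == set0) || (cls_min c \in s) -> cone c s = 0.
Proof. by rewrite /cone; case: and3P => // -[-> /negbTE -> /negbTE ->]. Qed.

Lemma coneE c s : o \in s -> s :&: cls_set c != set0 -> cls_min c \notin s ->
  cone c s = sgn (pos (cls_min c) (cls_min c |: s)) *: ebasis (cls_min c |: s).
Proof. by move=> s0 sc sm; rewrite /cone s0 sc sm. Qed.

Lemma homotopy_dterm c s i : homotopy c (dterm s i) =
  if removable s i then sgn (pos i s) *: cone c (s :\ i) else 0.
Proof.
rewrite /dterm; case: ifP => _; last exact: linear0.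
by rewrite linearZ /= /homotopy linext_ebasis.
Qed.

Lemma homotopy_dbasis0 c s : (forall i, i \in s -> cone c (s :\ i) = 0) ->
  homotopy c (dbasis x s) = 0.
Proof.
move=> c0; rewrite dbasisE linear_sum big1 //= => i si.
by rewrite homotopy_dterm c0 // scaler0 if_same.
Qed.

Lemma cone_homotopy_trivial c s : (o \notin s) || (s :&: cls_set c == set0) ->
  dD x (cone c s) + homotopy c (dbasis x s) - (ebasis s - retract c s) = 0.
Proof.
move=> triv; rewrite cone0 ?triv // homotopy_dbasis0 => [|i si]; last first.
  apply: cone0; case/orP: triv => [ns0 | /eqP sc].
    by rewrite !inE negb_and ns0 orbT.
  by rewrite -subset0 -sc setSI ?orbT // subD1set.
suff -> : retract c s = ebasis s by rewrite linear0 !add0r subrr oppr0.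
rewrite /retract; case: ifP => //= s0.
have /eqP -> : s :&: cls_set c == set0 by move: triv; rewrite s0.
by rewrite cards0.
Qed.

Lemma exists_other (A : {set I}) m : m \in A -> #|A| != 1%N ->
  exists2 j, j \in A & j != m.
Proof.
move=> mA nA1; have /set0Pn [j] : A :\ m != set0.
  by apply: contraNneq nA1 => Am0; rewrite (cardsD1 m) mA Am0 cards0.
by rewrite !inE => /andP [njm jA]; exists j.
Qed.

Lemma cone_homotopy_min_in c s : o \in s -> s :&: cls_set c != set0 ->
  cls_min c \in s ->
  dD x (cone c s) + homotopy c (dbasis x s) - (ebasis s - retract c s) = 0.
Proof.
move=> s0 sc sm; set m := cls_min c.
have [mc _] := cls_minP (cls_set_neq0 sc).
have msc : m \in s :&: cls_set c by rewrite inE sm mc.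
have -> : homotopy c (dbasis x s) = homotopy c (dterm s m).
  rewrite dbasisE linear_sum (bigD1 m) //= big1 ?addr0 // => i /andP [si nim].
  have msi : m \in s :\ i by rewrite !inE sm eq_sym nim.
  by rewrite homotopy_dterm cone0 ?scaler0 ?if_same // msi !orbT.
rewrite cone0 ?sm ?orbT // linear0 add0r homotopy_dterm /retract s0 /= -/m.
rewrite cards_eq0 (negbTE sc).
case: (eqVneq #|s :&: cls_set c| 1%N) => [/eqP/cards1P [k sck] | sc1].
  have {k sck} scm : s :&: cls_set c = [set m].
    by move: msc; rewrite sck inE => /eqP ->.
  rewrite cone0 ?scaler0 ?if_same; last by rewrite setIDAC scm setDv eqxx orbT.
  have -> : m |: (s :\: cls_set c) = s by rewrite -[RHS](setID s (cls_set c)) scm.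
  by rewrite subrr subr0.
have [j /setIP [sj jc] njm] := exists_other msc sc1.
have -> : removable s m by apply: (removable_cls s0 sm sj _ mc jc); rewrite eq_sym.
rewrite coneE ?setD11 ?setD1K //; last first.
  by apply/set0Pn; exists j; rewrite in_setI in_setD1 njm sj jc.
by rewrite in_setD1 s0 andbT; apply: contraTneq mc => e; rewrite -/m -e; exact: cls_set0.
by rewrite -/m scalerA sgnK scale1r subr0 subrr.
Qed.

Lemma removable_setU1 c s m i j : o \in s -> m \notin s -> m \in cls_set c ->
  j \in s -> j \in cls_set c -> i \in s -> i != o -> i != j ->
  removable (m |: s) i = removable s i.
Proof.
move=> s0 ms mc sj jc si ni0 nij.
have njm : j != m by apply: contraNneq ms => <-.
have in_ms k : k \in s -> k \in m |: s by move=> sk; rewrite in_setU1 sk orbT.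
have /eqmxP meet_i : (meet x ((m |: s) :\ i :\ m) == meet x ((m |: s) :\ i))%MS.
  apply: (removable_cls (j := j) (c := c)) => //; rewrite ?in_setD1.
  - by rewrite eq_sym ni0 in_ms.
  - by rewrite setU11 andbT; apply: contraNneq ms => ->.
  - by rewrite eq_sym nij in_ms.
  - by rewrite eq_sym.
have /eqmxP meet_s : (meet x ((m |: s) :\ m) == meet x (m |: s))%MS.
  apply: (removable_cls (j := j) (c := c)); rewrite ?setU11 ?in_ms //.
  by rewrite eq_sym.
rewrite setD1C setU1K // in meet_i; rewrite setU1K // in meet_s.
apply/eqmxP/eqmxP => e.
  exact: eqmx_trans meet_i (eqmx_trans e (eqmx_sym meet_s)).
exact: eqmx_trans (eqmx_sym meet_i) (eqmx_trans e meet_s).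
Qed.

Definition cone_term c s i : cochain n :=
  sgn (pos (cls_min c) (cls_min c |: s)) *: dterm (cls_min c |: s) i
  + homotopy c (dterm s i).

Lemma cone_term0_DAprime c s : cone_term c s o \in DAprime n.
Proof.
rewrite /cone_term homotopy_dterm cone0 ?scaler0 ?if_same ?addr0; last first.
  by rewrite !inE eqxx.
rewrite /dterm; case: ifP => _; last by rewrite scaler0 mem0v.
by rewrite !memvZ // ebasis_DAprime // !inE eqxx.
Qed.

Lemma cone_term_DAprime c s i : o \in s -> cls_min c \notin s -> i \in s ->
  s :&: cls_set c != set0 -> s :&: cls_set c != [set i] ->
  cone_term c s i \in DAprime n.
Proof.
move=> s0 ms si sc sci; case: (eqVneq i o) => [-> | ni0]; first exact: cone_term0_DAprime.
have [j /setIP [sj jc] nji] : exists2 j, j \in s :&: cls_set c & j != i.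
  case/set0Pn: sc => k ksc; case: (eqVneq k i) => [eki | nki]; last by exists k.
  apply: exists_other; first by rewrite -eki.
  apply: contra sci => /cards1P [k' e]; move: ksc; rewrite e eki in_set1.
  by move=> /eqP ->.
have [mc _] := cls_minP (cls_set_neq0 sc).
have nmi : cls_min c != i by apply: contraNneq ms => ->.
rewrite /cone_term homotopy_dterm /dterm.
rewrite (removable_setU1 s0 ms mc sj jc si ni0) 1?eq_sym //.
case: ifP => _; last by rewrite scaler0 addr0 mem0v.
have setU1D1 : cls_min c |: (s :\ i) = (cls_min c |: s) :\ i.
  by apply/setP => k; rewrite !inE; case: eqP => // ->; rewrite nmi.
have s0i : o \in s :\ i by rewrite in_setD1 s0 andbT eq_sym.
have msi : cls_min c \notin s :\ i by rewrite in_setD1 negb_and ms orbT.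
have sic : (s :\ i) :&: cls_set c != set0.
  by apply/set0Pn; exists j; rewrite in_setI in_setD1 nji sj jc.
rewrite (coneE s0i sic msi).
rewrite !scalerA setU1D1 -scalerDl -setU1D1 sgn_pos_cone ?scale0r ?mem0v //.
by rewrite eq_sym.
Qed.

Lemma cone_term_single c s i : o \in s -> cls_min c \notin s ->
  s :&: cls_set c = [set i] -> cone_term c s i = - ebasis ((cls_min c |: s) :\ i).
Proof.
move=> s0 ms sci; set m := cls_min c in ms *.
have /setIP [si ic] : i \in s :&: cls_set c by rewrite sci set11.
have sc : s :&: cls_set c != set0 by apply/set0Pn; exists i; rewrite sci set11.
have [mc m_min] := cls_minP (cls_set_neq0 sc).
have nmi : m != i by apply: contraNneq ms => ->.
have sic0 : (s :\ i) :&: cls_set c = set0 by rewrite setIDAC sci setDv.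
rewrite /cone_term homotopy_dterm cone0; last by rewrite sic0 eqxx orbT.
rewrite scaler0 if_same addr0 /dterm -/m.
rewrite (removable_cls (j := m) (c := c)) ?setU11 ?in_setU1 ?s0 ?si ?orbT //; last first.
  by rewrite eq_sym.
have mi : (m < i)%N by rewrite ltn_neqAle m_min // andbT.
rewrite scalerA (pos_next mi) ?in_setU1 ?si ?orbT // ?exprS ?mulN1r ?mulNr.
  by rewrite -/m mulrN sgnK scaleN1r.
move=> k; rewrite in_setU1 => /orP [/eqP -> | sk]; first by rewrite ltnn.
apply/negP => /[dup] mki /(cls_set_interval mc ic) kc.
have : k \in s :&: cls_set c by rewrite inE sk kc.
by rewrite sci in_set1 => /eqP ki; move: mki; rewrite ki ltnn andbF.
Qed.

Lemma cone_homotopy_min_out c s : o \in s -> s :&: cls_set c != set0 ->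
  cls_min c \notin s ->
  dD x (cone c s) + homotopy c (dbasis x s) - (ebasis s - retract c s) \in DAprime n.
Proof.
move=> s0 sc ms; set m := cls_min c in ms *.
have [mc _] := cls_minP (cls_set_neq0 sc).
have [j /setIP [sj jc]] := set0Pn _ sc.
have rm : removable (m |: s) m.
  apply: (removable_cls (j := j) (c := c)); rewrite ?setU11 ?in_setU1 ?s0 ?sj ?orbT //.
  by apply/eqP => e; move: ms; rewrite e sj.
have -> : dD x (cone c s) + homotopy c (dbasis x s) - (ebasis s - retract c s) =
          \sum_(i in s) cone_term c s i + retract c s.
  rewrite (coneE s0 sc ms) linearZ /= dD_ebasis dbasisE big_setU1 //= {1}/dterm rm.
  rewrite setU1K // dbasisE linear_sum /= scalerDr scalerA sgnK scale1r.
  rewrite scaler_sumr /cone_term big_split /=.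
  by apply/ffunP => t; rewrite !ffunE; ring.
rewrite /retract s0 /= cards_eq0 (negbTE sc).
case: (eqVneq #|s :&: cls_set c| 1%N) => [/eqP/cards1P [i sci] | sc1]; last first.
  rewrite addr0; apply: memv_suml => i si; apply: cone_term_DAprime => //.
  by apply/eqP => e; rewrite e cards1 in sc1.
have /setIP [si _] : i \in s :&: cls_set c by rewrite sci set11.
rewrite (bigD1 i) //= (cone_term_single s0 ms sci).
have nmi : m != i by apply/eqP => e; move: ms; rewrite e si.
have -> : (m |: s) :\ i = m |: (s :\: cls_set c).
  have -> : s :\: cls_set c = s :\ i by rewrite -sci setDIr setDv set0U.
  by apply/setP => k; rewrite !inE; case: (eqVneq k m) => // ->; rewrite nmi.
rewrite addrAC addNr add0r; apply: memv_suml => k /andP [sk nki].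
by apply: cone_term_DAprime; rewrite // sci (inj_eq set1_inj) eq_sym.
Qed.

Lemma cone_homotopy c s :
  dD x (cone c s) + homotopy c (dbasis x s) - (ebasis s - retract c s) \in DAprime n.
Proof.
case: (boolP ((o \notin s) || (s :&: cls_set c == set0))) => [triv | ].
  by rewrite cone_homotopy_trivial ?mem0v.
rewrite negb_or negbK => /andP [s0 sc].
case: (boolP (cls_min c \in s)) => ms; last exact: cone_homotopy_min_out.
by rewrite cone_homotopy_min_in ?mem0v.
Qed.

Lemma inE_cls c u v : u \in cls_set c -> v \in cls_set c -> u != v -> inE_ x u v.
Proof.
move=> /cls_setP [nu0 cu] /cls_setP [nv0 cv] nuv.
by rewrite /inE_ nu0 nv0 nuv; apply/simA_cls => //; rewrite cu cv.
Qed.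

Lemma cone_Vhat c s : cone c s \in Vhat x.
Proof.
rewrite /cone; case: and3P => [[s0 sc ms] | _]; last exact: mem0v.
have [j /setIP [sj jc]] := set0Pn _ sc.
have [mc _] := cls_minP (cls_set_neq0 sc).
rewrite memvZ // (ebasis_triple_Vhat (u := cls_min c) (v := j)) ?setU11 //.
- by rewrite in_setU1 s0 orbT.
- by rewrite in_setU1 sj orbT.
by apply: (inE_cls mc jc); apply: contraNneq ms => ->.
Qed.

Lemma homotopy_Vhat c f : homotopy c f \in Vhat x.
Proof. by apply: memv_linext (ebasis_span_predT f) => s _; exact: cone_Vhat. Qed.

Lemma retract_Vhat c s : ebasis s - retract c s \in Vhat x.
Proof.
rewrite /retract; case: ifP => [_ | /negbFE s0]; first by rewrite subrr mem0v.
case: ifP => [_ | sc0]; first by rewrite subrr mem0v.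
have sc : s :&: cls_set c != set0 by rewrite -cards_eq0 sc0.
have [mc _] := cls_minP (cls_set_neq0 sc).
have [a asc] := set0Pn _ sc; have /setIP [sa ac] := asc.
case: ifP => [/cards1P [i sci] | sc1]; last first.
  have [j /setIP [sj jc] nja] := exists_other asc (negbT sc1).
  by rewrite subr0 (ebasis_triple_Vhat s0 sa sj) // (inE_cls ac jc) // eq_sym.
have /setIP [si ic] : i \in s :&: cls_set c by rewrite sci set11.
have s_split : s = i |: (s :\: cls_set c) by rewrite -[LHS](setID s (cls_set c)) sci.
case: (eqVneq i (cls_min c)) => [eim | nim].
  by rewrite -{1}eim -s_split subrr mem0v.
rewrite {1}s_split ebasis_diff_Vhat ?(inE_cls ic mc) //.
- by rewrite in_setD s0 cls_set0.
- by rewrite in_setD ic.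
- by rewrite in_setD mc.
Qed.

Lemma homotopy_DAprime c f : f \in DAprime n -> homotopy c f = 0.
Proof.
move=> fD; rewrite /homotopy (eq_linext (C := fun=> 0) _ fD) => [|s ns0].
  by rewrite /linext big1 // => s _; rewrite scaler0.
by rewrite cone0 // ns0.
Qed.

Lemma homotopy_homog c (k : int) f :
  f \in homog_space x k -> homotopy c f \in homog_space x (k - 1).
Proof.
apply: memv_linext => s /eqP degs; rewrite /cone; case: and3P => [[s0 sc ms] | _].
  have [j /setIP [sj jc]] := set0Pn _ sc.
  have [mc _] := cls_minP (cls_set_neq0 sc).
  rewrite memvZ // ebasis_span_ebasis // -degs.
  have := deg_setD1 (s := cls_min c |: s) (i := cls_min c) (x := x).
  rewrite setU1K // setU11 => -> //; first by rewrite addrK.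
  apply: (removable_cls (j := j) (c := c)); rewrite ?setU11 ?in_setU1 ?s0 ?sj ?orbT //.
  by apply: contraNneq ms => ->.
exact: mem0v.
Qed.

Definition deform c f := f - dD x (homotopy c f) - homotopy c (dD x f).

Lemma deform_retract c f : deform c f - linext (retract c) f \in DAprime n.
Proof.
have -> : deform c f - linext (retract c) f = - linext (fun s =>
    dD x (cone c s) + homotopy c (dbasis x s) - (ebasis s - retract c s)) f.
  rewrite !linext_funB linext_funD linext_ebasisK -!linext_comp /deform.
  by apply/ffunP => t; rewrite !ffunE; ring.
by rewrite memvN; apply: memv_linext (ebasis_span_predT f) => s _; exact: cone_homotopy.
Qed.

Lemma deform_DAprime c f : f \in DAprime n -> deform c f = f.
Proof.
by move=> fD; rewrite /deform !homotopy_DAprime ?dD_DAprime // raddf0 !subr0.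
Qed.

Lemma dD_deform c f : dD x (deform c f) = deform c (dD x f).
Proof.
by rewrite /deform !linearB /= !dDK (homotopy_DAprime c (mem0v _)) !subr0.
Qed.

Lemma deform_homog c (k : int) f :
  f \in homog_space x k -> deform c f \in homog_space x k.
Proof.
move=> fk; rewrite /deform !memvB //.
  by rewrite -[k](subrK 1) dD_homog // homotopy_homog.
by rewrite -[k](addrK 1) homotopy_homog // dD_homog.
Qed.

Fixpoint retracts k f : cochain n :=
  if k is k'.+1 then linext (retract k') (retracts k' f) else f.

Lemma retracts_is_linear k : linear (retracts k).
Proof. by elim: k => [|k IH] a f g //=; rewrite IH linearP. Qed.

HB.instance Definition _ k :=
  GRing.isLinear.Build _ _ _ _ (retracts k) (retracts_is_linear k).

Lemma linext_retract_DAprime c f : f \in DAprime n -> linext (retract c) f = f.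
Proof.
move=> fD; rewrite -[RHS]linext_ebasisK.
by apply: (eq_linext _ fD) => s ns0; rewrite /retract ns0.
Qed.

Lemma retracts_DAprime k f : f \in DAprime n -> retracts k f = f.
Proof. by move=> fD; elim: k => //= k ->; rewrite linext_retract_DAprime. Qed.

Lemma retracts_Vhat k f : f - retracts k f \in Vhat x.
Proof.
elim: k => [|k IH] /=; first by rewrite subrr mem0v.
rewrite -(subrKA (retracts k f)) memvD //.
rewrite -{1}[retracts k f]linext_ebasisK -linext_funB.
by apply: memv_linext (ebasis_span_predT _) => s _; exact: retract_Vhat.
Qed.

Lemma retract_setU1_out c t w : o \in t -> w \notin cls_set c ->
  retract c (w |: t) =
  if #|t :&: cls_set c| == 0%N then ebasis (w |: t)
  else if #|t :&: cls_set c| == 1%N then ebasis (w |: (cls_min c |: (t :\: cls_set c)))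
  else 0.
Proof.
move=> t0 wc; rewrite /retract in_setU1 t0 orbT /=.
have -> : (w |: t) :&: cls_set c = t :&: cls_set c.
  apply/setP => k; rewrite !in_setI in_setU1.
  by case: eqP => // ->; rewrite (negbTE wc) !andbF.
suff -> : cls_min c |: ((w |: t) :\: cls_set c) = w |: (cls_min c |: (t :\: cls_set c)).
  by [].
apply/setP => k; rewrite !in_setU1 !in_setD in_setU1.
by case: (eqVneq k w) => [-> | _] /=; rewrite ?wc ?orbT.
Qed.

Lemma retract_setU1_in c t w : o \in t -> w \in cls_set c -> w \notin t ->
  retract c (w |: t) =
  if t :&: cls_set c == set0 then ebasis (cls_min c |: (t :\: cls_set c)) else 0.
Proof.
move=> t0 wc wt; rewrite /retract in_setU1 t0 orbT /=.
have -> : (w |: t) :&: cls_set c = w |: (t :&: cls_set c).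
  by apply/setP => k; rewrite !(in_setI, in_setU1); case: (eqVneq k w) => [-> | _] //=.
have -> : (w |: t) :\: cls_set c = t :\: cls_set c.
  apply/setP => k; rewrite !(in_setD, in_setU1).
  by case: (eqVneq k w) => [-> | _] //=; rewrite wc.
rewrite cardsU1 in_setI (negbTE wt) /= -cards_eq0.
by case: #|t :&: cls_set c| => [|[|k]].
Qed.

Lemma cls_setN c c' i : i \in cls_set c -> c' != c -> i \notin cls_set c'.
Proof.
move=> /cls_setP [_ ci] ncc'; apply/cls_setP => -[_ ci'].
by rewrite -ci' ci eqxx in ncc'.
Qed.

Lemma cls_min_in c t : #|t :&: cls_set c| = 1%N -> cls_min c \in cls_set c.
Proof.
move=> /eqP/cards1P [i ti]; apply: (proj1 (cls_minP (cls_set_neq0 (A := t) _))).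
by rewrite ti; apply/set0Pn; exists i; rewrite set11.
Qed.

Lemma retracts_triple t u v c k : o \in t -> u \in t -> v \in t -> u != v ->
  u \in cls_set c -> v \in cls_set c -> (c < k)%N -> retracts k (ebasis t) = 0.
Proof.
move=> t0 tu tv nuv uc vc ck.
have inv k' : retracts k' (ebasis t) = 0 \/ (k' <= c)%N /\ exists2 t',
    retracts k' (ebasis t) = ebasis t' & [&& o \in t', u \in t' & v \in t'].
  elim: k' => [|k' IH] /=; first by right; split=> //; exists t; rewrite ?t0 ?tu ?tv.
  case: IH => [-> | [k'c [t' -> /and3P [t'0 t'u t'v]]]]; first by left; rewrite linear0.
  rewrite linext_ebasis /retract t'0 /=.
  case: (eqVneq k' c) => [-> | nk'c].
    have uv_sub : [set u; v] \subset t' :&: cls_set c.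
      apply/subsetP => j; rewrite in_set2 => /orP [] /eqP ->.
        by rewrite in_setI t'u.
      by rewrite in_setI t'v.
    have := subset_leq_card uv_sub; rewrite cards2 nuv.
    by case: #|_| => [|[|j]]; left.
  have uk' := cls_setN uc nk'c; have vk' := cls_setN vc nk'c.
  have k'c' : (k' < c)%N by rewrite ltn_neqAle nk'c k'c.
  case: ifP => _; first by right; split=> //; exists t'; rewrite ?t'0 ?t'u ?t'v.
  case: ifP => _; last by left.
  right; split=> //; exists (cls_min k' |: (t' :\: cls_set k')) => //.
  by rewrite !in_setU1 !in_setD t'0 t'u t'v cls_set0 (negbTE uk') (negbTE vk') !orbT.
by case: (inv k) => // -[kc _]; rewrite leqNgt ck in kc.
Qed.

Lemma retracts_diff t u v c k : o \in t -> u \notin t -> v \notin t -> u != v ->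
  u \in cls_set c -> v \in cls_set c -> (c < k)%N ->
  retracts k (ebasis (u |: t) - ebasis (v |: t)) = 0.
Proof.
move=> t0 tu tv nuv uc vc ck.
have nu0 : u != o by apply: contraTneq uc => ->; exact: cls_set0.
have nv0 : v != o by apply: contraTneq vc => ->; exact: cls_set0.
have inv k' : retracts k' (ebasis (u |: t) - ebasis (v |: t)) = 0 \/
    (k' <= c)%N /\ exists2 t', retracts k' (ebasis (u |: t) - ebasis (v |: t)) =
      ebasis (u |: t') - ebasis (v |: t') & [&& o \in t', u \notin t' & v \notin t'].
  elim: k' => [|k' IH] /=; first by right; split=> //; exists t; rewrite ?t0 ?tu ?tv.
  case: IH => [-> | [k'c [t' -> /and3P [t'0 t'u t'v]]]]; first by left; rewrite linear0.
  rewrite linearB /= !linext_ebasis.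
  case: (eqVneq k' c) => [-> | nk'c].
    by left; rewrite !retract_setU1_in //; case: ifP; rewrite subrr.
  have uk' := cls_setN uc nk'c; have vk' := cls_setN vc nk'c.
  have k'c' : (k' < c)%N by rewrite ltn_neqAle nk'c k'c.
  rewrite !retract_setU1_out //.
  case: ifP => _; first by right; split=> //; exists t'; rewrite ?t'0 ?t'u ?t'v.
  case: ifP => [/eqP t'k' | _]; last by left; rewrite subrr.
  have mk' := cls_min_in t'k'.
  right; split=> //; exists (cls_min k' |: (t' :\: cls_set k')) => //.
  rewrite !in_setU1 !in_setD t'0 cls_set0 (negbTE t'u) (negbTE t'v) orbT !andbF !orbF /=.
  by apply/andP; split; [apply: contraNneq uk' | apply: contraNneq vk'] => ->.
by case: (inv k) => // -[kc _]; rewrite leqNgt ck in kc.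
Qed.

Lemma Iuv_retracts u v w k : inE_ x u v -> (cls u < k)%N -> w \in Iuv x u v ->
  retracts k w = 0.
Proof.
case/and4P => nu0 nv0 nuv /(simA_cls nu0 nv0) cuv uk /memv_sumP [ws wsP ->].
have uc : u \in cls_set (cls u) by apply/cls_setP.
have vc : v \in cls_set (cls u) by apply/cls_setP; rewrite cuv.
rewrite linear_sum big1 // => Y Yout.
have notY i : i \in [set o; u; v] -> i \notin Y.
  by move=> io; apply/negP => /(subsetP Yout); rewrite in_setC io.
have Yu : u \notin Y by apply: notY; rewrite !inE eqxx orbT.
have Yv : v \notin Y by apply: notY; rewrite !inE eqxx !orbT.
have [_ /vlineP [a ->] [_ /vlineP [b ->] ->]] := memv_addP (wsP Y Yout).
rewrite linearD !linearZ /=.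
have -> : retracts k (ebasis (o |: (u |: (v |: Y)))) = 0.
  by apply: (retracts_triple _ _ _ nuv uc vc uk); rewrite !in_setU1 eqxx ?orbT.
have swap i : o |: (i |: Y) = i |: (o |: Y) by rewrite setUCA.
have -> : retracts k (ebasis (o |: (u |: Y)) - ebasis (o |: (v |: Y))) = 0.
  by rewrite !swap (retracts_diff _ _ _ nuv uc vc uk) ?setU11 // in_setU1 negb_or
       ?nu0 ?nv0.
by rewrite !scaler0 addr0.
Qed.

Lemma Vhat_retracts k f : (forall i, cls i < k)%N -> f \in Vhat x ->
  retracts k f \in DAprime n.
Proof.
move=> clsk /memv_addP [a aV [b bD ->]].
rewrite linearD /= (retracts_DAprime _ bD) memvD //.
case/memv_sumP: aV => au auP ->; rewrite linear_sum big1 ?mem0v // => u _.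
case/memv_sumP: (auP u isT) => ws wsP ->; rewrite linear_sum big1 // => v uv.
exact: Iuv_retracts uv (clsk u) (wsP v uv).
Qed.

Fixpoint deforms k f : cochain n :=
  if k is k'.+1 then deform k' (deforms k' f) else f.

Lemma deforms_retracts k f : deforms k f - retracts k f \in DAprime n.
Proof.
elim: k => [|k IH] /=; first by rewrite subrr mem0v.
rewrite -(subrKA (linext (retract k) (deforms k f))) memvD ?deform_retract //.
by rewrite -linearB /= linext_retract_DAprime.
Qed.

Lemma deforms_Vhat k f : f - deforms k f \in Vhat x.
Proof.
rewrite -(subrKA (retracts k f)) memvD ?retracts_Vhat // -opprB memvN.
by apply: (subvP (DAprime_sub_Vhat x)); exact: deforms_retracts.
Qed.

Lemma dD_deforms k f : dD x (deforms k f) = deforms k (dD x f).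
Proof. by elim: k => //= k <-; rewrite dD_deform. Qed.

Lemma deforms_DAprime k f : f \in DAprime n -> deforms k f = f.
Proof. by move=> fD; elim: k => //= k ->; rewrite deform_DAprime. Qed.

Lemma deforms_homog k (j : int) f :
  f \in homog_space x j -> deforms k f \in homog_space x j.
Proof. by move=> fj; elim: k => //= k; exact: deform_homog. Qed.

Lemma deforms_cocycle k f : dD x f \in DAprime n ->
  deforms k f = f - dD x (\sum_(c < k) homotopy c (deforms c f)).
Proof.
move=> dfD; elim: k => [|k IH] /=; first by rewrite big_ord0 linear0 subr0.
rewrite big_ord_recr linearD opprD addrA -IH /deform dD_deforms (deforms_DAprime k dfD).
by rewrite (homotopy_DAprime k dfD) subr0.
Qed.

Definition cls_bound := (\max_(i : I) cls i).+1.

Lemma cls_lt_bound i : (cls i < cls_bound)%N.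
Proof. by rewrite ltnS (leq_bigmax i). Qed.

Lemma Vhat_deforms f : f \in Vhat x -> deforms cls_bound f \in DAprime n.
Proof.
move=> fV; rewrite -(subrK (retracts cls_bound f) (deforms cls_bound f)).
by rewrite memvD ?deforms_retracts ?Vhat_retracts //; exact: cls_lt_bound.
Qed.

Lemma dD_Vhat f : f \in Vhat x -> dD x f \in Vhat x.
Proof.
move=> fV; rewrite -(subrK (deforms cls_bound (dD x f)) (dD x f)) memvD ?deforms_Vhat //.
rewrite -dD_deforms; apply: (subvP (DAprime_sub_Vhat x)).
exact/dD_DAprime/Vhat_deforms.
Qed.

Lemma Vhat_acyclic (k : int) f :
  f \in Vhat x -> f \in homog_space x k -> dD x f \in DAprime n ->
  exists g, [/\ g \in Vhat x, g \in homog_space x (k - 1) & f - dD x g \in DAprime n].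
Proof.
move=> fV fk dfD; exists (\sum_(c < cls_bound) homotopy c (deforms c f)); split.
- by apply: memv_suml => c _; exact: homotopy_Vhat.
- by apply: memv_suml => c _; apply: homotopy_homog; exact: deforms_homog.
by rewrite -deforms_cocycle // Vhat_deforms.
Qed.

End Classes.

Unset Implicit Arguments.

Theorem lemma3p4 (l n : nat) (x : 'I_n.+1 -> 'M[Cplx]_l)
  (Harr : is_arrangement x)
  (Horder : exists cls : 'I_n.+1 -> nat,
      (forall y z : 'I_n.+1, y != ord0 -> z != ord0 ->
         (simA x y z <-> cls y = cls z)) /\
      (forall y z : 'I_n.+1, y != ord0 -> z != ord0 ->
         (y <= z)%N -> (cls y <= cls z)%N)) :
  (forall f : cochain n, f \in Vhat x -> dD x f \in Vhat x) /\
  (forall (k : int) (f : cochain n),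
      f \in Vhat x -> homog x k f -> dD x f \in DAprime n ->
      exists g : cochain n,
        [/\ g \in Vhat x, homog x (k - 1) g & f - dD x g \in DAprime n]).
Proof.
case: Horder => cls [simA_cls cls_mono]; split=> [f | k f fV /homogP fk dfD].
  exact: dD_Vhat simA_cls cls_mono f.
have [g [gV gk fg]] := Vhat_acyclic simA_cls cls_mono fV fk dfD.
by exists g; split=> //; apply/homogP.
Qed.
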